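(* Let $T$ be a $\delta$-Jordan Lie supertriple system and $(V,\theta)$ a representation of $T$. Then $d^{3}d^{1}=0$ and $d^{4}d^{2}=0$; that is, $d^3(d^1f)=0$ for every homogeneous linear map $f:T\to V$, and $d^4(d^2 f)=0$ for every 2-cochain $f\in C^2_\delta(T,V)$.
   Context: A $\delta$-Jordan Lie supertriple system ($\delta\in\{1,-1\}$) is a $\mathbb{Z}_2$-graded vector space $T$ with a trilinear product $[\cdot,\cdot,\cdot]$ such that, for all homogeneous $a,b,c,d,e$ (with $|a|$ the degree of $a$): $|[a,b,c]|=|a|+|b|+|c|$; $[b,a,c]=-\delta(-1)^{|a||b|}[a,b,c]$; $(-1)^{|a||c|}[a,b,c]+(-1)^{|b||a|}[b,c,a]+(-1)^{|c||b|}[c,a,b]=0$; and $[a,b,[c,d,e]]=[[a,b,c],d,e]+(-1)^{|c|(|a|+|b|)}[c,[a,b,d],e]+\delta(-1)^{(|a|+|b|)(|c|+|d|)}[c,d,[a,b,e]]$. A representation is $(V,\theta)$, $V$ a $\mathbb{Z}_2$-graded space, $\theta:T\otimes T\to End(V)$ bilinear, such that with $D(a,b)=(-1)^{|a||b|}\theta(b,a)-\delta\theta(a,b)$, for homogeneous $a,b,c,d$: (R1) $(-1)^{(|a|+|b|)(|c|+|d|)}\theta(c,d)\theta(a,b)-\delta(-1)^{|a||b|+|d|(|c|+|a|)}\theta(b,d)\theta(a,c)-\theta(a,[b,c,d])+(-1)^{|a|(|b|+|c|)}D(b,c)\theta(a,d)=0$; (R2) $\delta(-1)^{(|a|+|b|)(|c|+|d|)}\theta(c,d)D(a,b)-\delta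 D(a,b)\theta(c,d)+\theta([a,b,c],d)+\delta(-1)^{|c|(|a|+|b|)}\theta(c,[a,b,d])=0$; (R3) $D([a,b,c],d)+(-1)^{|c|(|a|+|b|)}D(c,[a,b,d])-\delta D(a,b)D(c,d)+(-1)^{(|a|+|b|)(|c|+|d|)}D(c,d)D(a,b)=0$. A 2-cochain is a homogeneous bilinear map $f:T\times T\to V$ with $f(y,x)=-\delta(-1)^{|x||y|}f(x,y)$. For homogeneous multilinear maps $f$ of degree $|f|$ into $V$ (all $x_i,y$ homogeneous in $T$), define: $d^{1}f(x_1,x_2,x_3)=(-1)^{(|f|+|x_1|)(|x_2|+|x_3|)}\theta(x_2,x_3)f(x_1)-f([x_1,x_2,x_3])+\delta(-1)^{|f|(|x_1|+|x_2|)}D(x_1,x_2)f(x_3)-\delta(-1)^{|x_2||x_3|+|f|(|x_1|+|x_3|)}\theta(x_1,x_3)f(x_2)$ for linear $f$; $d^{2}f(y,x_1,x_2,x_3)=(-1)^{(|f|+|y|+|x_1|)(|x_2|+|x_3|)}\theta(x_2,x_3)f(y,x_1)-f(y,[x_1,x_2,x_3])-\delta(-1)^{|x_2||x_3|+(|f|+|y|)(|x_1|+|x_3|)}\theta(x_1,x_3)f(y,x_2)+\delta(-1)^{(|f|+|y|)(|x_1|+|x_2|)}D(x_1,x_2)f(y,x_3)$ for bilinear $f$; $d^{3}f(x_1,\dots,x_5)=(-1)^{(|f|+|x_1|+|x_2|+|x_3|)(|x_4|+|x_5|)}\theta(x_4,x_5)f(x_1,x_2,x_3)-\delta(-1)^{(|f|+|x_1|+|x_2|)(|x_3|+|x_5|)+|x_4||x_5|}\theta(x_3,x_5)f(x_1,x_2,x_4)-\delta(-1)^{|f|(|x_1|+|x_2|)}D(x_1,x_2)f(x_3,x_4,x_5)+(-1)^{(|f|+|x_1|+|x_2|)(|x_3|+|x_4|)}D(x_3,x_4)f(x_1,x_2,x_5)+f([x_1,x_2,x_3],x_4,x_5)-f(x_1,x_2,[x_3,x_4,x_5])+(-1)^{|x_3|(|x_1|+|x_2|)}f(x_3,[x_1,x_2,x_4],x_5)+\delta(-1)^{(|x_1|+|x_2|)(|x_3|+|x_4|)}f(x_3,x_4,[x_1,x_2,x_5])$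 for trilinear $f$; $d^{4}f(y,x_1,\dots,x_5)=(-1)^{(|f|+|y|+|x_1|+|x_2|+|x_3|)(|x_4|+|x_5|)}\theta(x_4,x_5)f(y,x_1,x_2,x_3)-\delta(-1)^{(|f|+|y|+|x_1|+|x_2|)(|x_3|+|x_5|)+|x_4||x_5|}\theta(x_3,x_5)f(y,x_1,x_2,x_4)-\delta(-1)^{(|f|+|y|)(|x_1|+|x_2|)}D(x_1,x_2)f(y,x_3,x_4,x_5)+(-1)^{(|f|+|y|+|x_1|+|x_2|)(|x_3|+|x_4|)}D(x_3,x_4)f(y,x_1,x_2,x_5)+f(y,[x_1,x_2,x_3],x_4,x_5)-f(y,x_1,x_2,[x_3,x_4,x_5])+(-1)^{|x_3|(|x_1|+|x_2|)}f(y,x_3,[x_1,x_2,x_4],x_5)+\delta(-1)^{(|x_1|+|x_2|)(|x_3|+|x_4|)}f(y,x_3,x_4,[x_1,x_2,x_5])$ for 4-linear $f$. The degree of $d^nf$ is taken to be $|f|$. *)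

From mathcomp Require Import all_boot all_algebra.
Set Implicit Arguments. Unset Strict Implicit. Unset Printing Implicit Defensive.
Import GRing.Theory.
Local Open Scope ring_scope.

(* (-1)^b for a parity b : bool (degrees live in Z2 = bool, + is xor, * is &&) *)
Definition sgn (K : pzRingType) (b : bool) : K := if b then -1 else 1.

Definition lin1 (K : pzRingType) (U W : lmodType K) (f : U -> W) : Prop :=
  forall (k : K) (x y : U), f (k *: x + y) = k *: f x + f y.

Definition is_Z2_grading (K : pzRingType) (W : lmodType K) (W_ : bool -> {pred W}) : Prop :=
  [/\ forall i, 0 \in W_ i /\
        (forall (k : K) x y, x \in W_ i -> y \in W_ i -> k *: x + y \in W_ i),
      forall x, exists x0 x1, [/\ x0 \in W_ false, x1 \in W_ true & x = x0 + x1]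
    & forall x, x \in W_ false -> x \in W_ true -> x = 0].

Section Defs.
Variables (K : fieldType) (T V : lmodType K).
Variables (T_ : bool -> {pred T}) (V_ : bool -> {pred V}).
Variable delta : K.
Variable br : T -> T -> T -> T.
Variable theta : T -> T -> V -> V.

Definition trilinear : Prop :=
  forall a b c, [/\ lin1 (fun x => br x b c), lin1 (fun x => br a x c)
                  & lin1 (fun x => br a b x)].

Definition is_dJLSTS : Prop :=
  [/\ delta = 1 \/ delta = -1,
      is_Z2_grading T_,
      trilinear
    & forall (ia ib ic id ie : bool) a b c d e,
        a \in T_ ia -> b \in T_ ib -> c \in T_ ic -> d \in T_ id -> e \in T_ ie ->
        [/\ br a b c \in T_ (ia (+) ib (+) ic),
            br b a c = - (delta * sgn K (ia && ib)) *: br a b c,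
            sgn K (ia && ic) *: br a b c + sgn K (ib && ia) *: br b c a
              + sgn K (ic && ib) *: br c a b = 0
          & br a b (br c d e) =
              br (br a b c) d e + sgn K (ic && (ia (+) ib)) *: br c (br a b d) e
              + (delta * sgn K ((ia (+) ib) && (ic (+) id))) *: br c d (br a b e)]].

Definition Dop (ia : bool) (a : T) (ib : bool) (b : T) (v : V) : V :=
  sgn K (ia && ib) *: theta b a v - delta *: theta a b v.

Definition is_rep : Prop :=
  [/\ is_Z2_grading V_,
      forall a b, lin1 (theta a b),
      forall b (k : K) x y v, theta (k *: x + y) b v = k *: theta x b v + theta y b v,
      forall a (k : K) x y v, theta a (k *: x + y) v = k *: theta a x v + theta a y v
    & forall (ia ib ic id : bool) a b c d v,
        a \in T_ ia -> b \in T_ ib -> c \in T_ ic -> d \in T_ id ->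
        [/\
            sgn K ((ia (+) ib) && (ic (+) id)) *: theta c d (theta a b v)
              - (delta * sgn K ((ia && ib) (+) (id && (ic (+) ia)))) *: theta b d (theta a c v)
              - theta a (br b c d) v
              + sgn K (ia && (ib (+) ic)) *: Dop ib b ic c (theta a d v) = 0,
            (delta * sgn K ((ia (+) ib) && (ic (+) id))) *: theta c d (Dop ia a ib b v)
              - delta *: Dop ia a ib b (theta c d v)
              + theta (br a b c) d v
              + (delta * sgn K (ic && (ia (+) ib))) *: theta c (br a b d) v = 0
          &
            Dop (ia (+) ib (+) ic) (br a b c) id d v
              + sgn K (ic && (ia (+) ib)) *: Dop ic c (ia (+) ib (+) id) (br a b d) v
              - delta *: Dop ia a ib b (Dop ic c id d v)
              + sgn K ((ia (+) ib) && (ic (+) id)) *: Dop ic c id d (Dop ia a ib b v) = 0]].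

Definition homog_lin1 (df : bool) (f : T -> V) : Prop :=
  lin1 f /\ forall i x, x \in T_ i -> f x \in V_ (df (+) i).

Definition cochain2 (df : bool) (f : T -> T -> V) : Prop :=
  [/\ forall y, lin1 (f y),
      forall x, lin1 (fun y => f y x),
      forall i j x y, x \in T_ i -> y \in T_ j -> f x y \in V_ (df (+) i (+) j)
    & forall i j x y, x \in T_ i -> y \in T_ j ->
        f y x = - (delta * sgn K (i && j)) *: f x y].

(* Coboundaries.  Cochains are evaluated on degree-tagged arguments (i, x)
   with x homogeneous of degree i; the degree of [x1,x2,x3] is i1+i2+i3. *)
Definition d1 (f : T -> V) (df : bool) (i1 : bool) (x1 : T) (i2 : bool) (x2 : T)
  (i3 : bool) (x3 : T) : V :=
  sgn K ((df (+) i1) && (i2 (+) i3)) *: theta x2 x3 (f x1)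
  - f (br x1 x2 x3)
  + (delta * sgn K (df && (i1 (+) i2))) *: Dop i1 x1 i2 x2 (f x3)
  - (delta * sgn K ((i2 && i3) (+) (df && (i1 (+) i3)))) *: theta x1 x3 (f x2).

Definition d2 (f : T -> T -> V) (df : bool) (iy : bool) (y : T) (i1 : bool) (x1 : T)
  (i2 : bool) (x2 : T) (i3 : bool) (x3 : T) : V :=
  sgn K ((df (+) iy (+) i1) && (i2 (+) i3)) *: theta x2 x3 (f y x1)
  - f y (br x1 x2 x3)
  - (delta * sgn K ((i2 && i3) (+) ((df (+) iy) && (i1 (+) i3)))) *: theta x1 x3 (f y x2)
  + (delta * sgn K ((df (+) iy) && (i1 (+) i2))) *: Dop i1 x1 i2 x2 (f y x3).

Definition d3 (g : bool -> T -> bool -> T -> bool -> T -> V) (df : bool)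
  (i1 : bool) (x1 : T) (i2 : bool) (x2 : T) (i3 : bool) (x3 : T)
  (i4 : bool) (x4 : T) (i5 : bool) (x5 : T) : V :=
  sgn K ((df (+) i1 (+) i2 (+) i3) && (i4 (+) i5)) *: theta x4 x5 (g i1 x1 i2 x2 i3 x3)
  - (delta * sgn K (((df (+) i1 (+) i2) && (i3 (+) i5)) (+) (i4 && i5)))
      *: theta x3 x5 (g i1 x1 i2 x2 i4 x4)
  - (delta * sgn K (df && (i1 (+) i2))) *: Dop i1 x1 i2 x2 (g i3 x3 i4 x4 i5 x5)
  + sgn K ((df (+) i1 (+) i2) && (i3 (+) i4)) *: Dop i3 x3 i4 x4 (g i1 x1 i2 x2 i5 x5)
  + g (i1 (+) i2 (+) i3) (br x1 x2 x3) i4 x4 i5 x5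
  - g i1 x1 i2 x2 (i3 (+) i4 (+) i5) (br x3 x4 x5)
  + sgn K (i3 && (i1 (+) i2)) *: g i3 x3 (i1 (+) i2 (+) i4) (br x1 x2 x4) i5 x5
  + (delta * sgn K ((i1 (+) i2) && (i3 (+) i4)))
      *: g i3 x3 i4 x4 (i1 (+) i2 (+) i5) (br x1 x2 x5).

Definition d4 (g : bool -> T -> bool -> T -> bool -> T -> bool -> T -> V) (df : bool)
  (iy : bool) (y : T)
  (i1 : bool) (x1 : T) (i2 : bool) (x2 : T) (i3 : bool) (x3 : T)
  (i4 : bool) (x4 : T) (i5 : bool) (x5 : T) : V :=
  sgn K ((df (+) iy (+) i1 (+) i2 (+) i3) && (i4 (+) i5))
      *: theta x4 x5 (g iy y i1 x1 i2 x2 i3 x3)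
  - (delta * sgn K (((df (+) iy (+) i1 (+) i2) && (i3 (+) i5)) (+) (i4 && i5)))
      *: theta x3 x5 (g iy y i1 x1 i2 x2 i4 x4)
  - (delta * sgn K ((df (+) iy) && (i1 (+) i2))) *: Dop i1 x1 i2 x2 (g iy y i3 x3 i4 x4 i5 x5)
  + sgn K ((df (+) iy (+) i1 (+) i2) && (i3 (+) i4))
      *: Dop i3 x3 i4 x4 (g iy y i1 x1 i2 x2 i5 x5)
  + g iy y (i1 (+) i2 (+) i3) (br x1 x2 x3) i4 x4 i5 x5
  - g iy y i1 x1 i2 x2 (i3 (+) i4 (+) i5) (br x3 x4 x5)
  + sgn K (i3 && (i1 (+) i2)) *: g iy y i3 x3 (i1 (+) i2 (+) i4) (br x1 x2 x4) i5 x5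
  + (delta * sgn K ((i1 (+) i2) && (i3 (+) i4)))
      *: g iy y i3 x3 i4 x4 (i1 (+) i2 (+) i5) (br x1 x2 x5).

End Defs.

From mathcomp Require Import all_boot all_algebra.
Set Implicit Arguments. Unset Strict Implicit. Unset Printing Implicit Defensive.
Import GRing.Theory.
Local Open Scope ring_scope.

(* Expanding d3 (d1 f), its terms sort by the argument fed to f.  The terms
   containing f x1 and f x2 form the relation (R1) evaluated at these vectors,
   those containing f x3 and f x4 form (R2), those containing f x5 form (R3),
   and the terms where f is applied to a nested triple product form f of the
   fundamental identity; all of them vanish.  For a 2-cochain f, d2 f with
   the first argument y frozen is d1 of the linear map f y of degree
   |f| + |y|, and d4 (d2 f) is d3 (d1 (f y)), so the second claim reduces to
   the first. *)

Section Lin1.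
Variables (K : pzRingType) (U W : lmodType K) (f : U -> W).
Hypothesis f_lin : lin1 f.

Lemma lin1_0 : f 0 = 0.
Proof.
have := f_lin 1 0 0; rewrite !scale1r addr0 => f00.
by apply: (@addrI _ (f 0)); rewrite addr0 -f00.
Qed.

Lemma lin1D x y : f (x + y) = f x + f y.
Proof. by have := f_lin 1 x y; rewrite !scale1r. Qed.

Lemma lin1Z k x : f (k *: x) = k *: f x.
Proof. by have := f_lin k x 0; rewrite !addr0 lin1_0 addr0. Qed.

Lemma lin1N x : f (- x) = - f x.
Proof. by rewrite -scaleN1r lin1Z scaleN1r. Qed.

End Lin1.

(* Identities between combinations of vectors whose coefficients are products
   of signs are decided by reflection: both sides are reified, and the
   integer coefficients of every atom are compared by computation. *)

Inductive sign_expr :=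
  | SignOf of bool | SignOne | SignMul of sign_expr & sign_expr | SignOpp of sign_expr.

Inductive comb_expr :=
  | Atom of nat | CombAdd of comb_expr & comb_expr | CombOpp of comb_expr
  | CombScale of sign_expr & comb_expr | CombZero.

Fixpoint sign_int (s : sign_expr) : int :=
  match s with
  | SignOf b => sgn int b
  | SignOne => 1
  | SignMul s1 s2 => sign_int s1 * sign_int s2
  | SignOpp s1 => - sign_int s1
  end.

Fixpoint comb_coef (e : comb_expr) (n : nat) : int :=
  match e with
  | Atom m => (m == n)%:R
  | CombAdd e1 e2 => comb_coef e1 n + comb_coef e2 n
  | CombOpp e1 => - comb_coef e1 n
  | CombScale s e1 => sign_int s * comb_coef e1 n
  | CombZero => 0
  end.

Section CombEval.
Variables (K : pzRingType) (V : lmodType K).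

Fixpoint sign_eval (s : sign_expr) : K :=
  match s with
  | SignOf b => sgn K b
  | SignOne => 1
  | SignMul s1 s2 => sign_eval s1 * sign_eval s2
  | SignOpp s1 => - sign_eval s1
  end.

Fixpoint comb_eval (env : seq V) (e : comb_expr) : V :=
  match e with
  | Atom n => nth 0 env n
  | CombAdd e1 e2 => comb_eval env e1 + comb_eval env e2
  | CombOpp e1 => - comb_eval env e1
  | CombScale s e1 => sign_eval s *: comb_eval env e1
  | CombZero => 0
  end.

Lemma sign_evalE s : sign_eval s = (sign_int s)%:~R.
Proof.
by elim: s => [[]||s1 IH1 s2 IH2|s1 IH1] //=; rewrite ?IH1 ?IH2 ?intrM ?intrN.
Qed.

Lemma comb_eval_atom (env : seq V) m :
  nth 0 env m = \sum_(i < size env) (comb_coef (Atom m) i)%:~R *: env`_i.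
Proof.
rewrite (_ : \sum_(i < _) _ = \sum_(i < size env | m == i) env`_i); last first.
  rewrite [RHS]big_mkcond; apply: eq_bigr => i _ /=.
  by case: (m == i); rewrite ?scale1r ?scale0r.
have [lt_m | le_m] := ltnP m (size env).
  by rewrite (big_pred1 (Ordinal lt_m)) // => i; rewrite eq_sym.
rewrite nth_default // big_pred0 // => i.
by apply/negbTE; apply: contraTneq le_m => ->; rewrite -ltnNge.
Qed.

Lemma comb_evalE env e :
  comb_eval env e = \sum_(i < size env) (comb_coef e i)%:~R *: env`_i.
Proof.
elim: e => [m|e1 IH1 e2 IH2|e1 IH1|s e1 IH1|] /=.
- exact: comb_eval_atom.
- by rewrite IH1 IH2 -big_split; apply: eq_bigr => i _; rewrite intrD scalerDl.
- by rewrite IH1 -sumrN; apply: eq_bigr => i _; rewrite intrN scaleNr.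
- by rewrite IH1 scaler_sumr; apply: eq_bigr => i _; rewrite scalerA sign_evalE intrM.
- by rewrite big1 // => i _; rewrite scale0r.
Qed.

Lemma comb_eval_eq env n e1 e2 : size env = n ->
  all (fun i => comb_coef e1 i == comb_coef e2 i) (iota 0 n) ->
  comb_eval env e1 = comb_eval env e2.
Proof.
move=> <- /allP same_coef; rewrite !comb_evalE; apply: eq_bigr => i _.
by rewrite (eqP (same_coef i _)) // mem_iota add0n ltn_ord.
Qed.

End CombEval.

Ltac reify_sign s :=
  lazymatch s with
  | sgn _ ?b => constr:(SignOf b)
  | @GRing.one _ => constr:(SignOne)
  | @GRing.mul _ ?x ?y =>
      let a := reify_sign x in let b := reify_sign y in constr:(SignMul a b)
  | @GRing.opp _ ?x => let a := reify_sign x in constr:(SignOpp a)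
  end.

Ltac atom_mem x l :=
  lazymatch l with
  | @nil _ => constr:(false)
  | @cons _ x _ => constr:(true)
  | @cons _ _ ?l' => atom_mem x l'
  end.

Ltac atom_index x l :=
  lazymatch l with
  | @cons _ x _ => constr:(0%N)
  | @cons _ _ ?l' => let n := atom_index x l' in constr:(S n)
  end.

Ltac collect_atoms t l :=
  lazymatch t with
  | @GRing.add _ ?a ?b => let l1 := collect_atoms a l in collect_atoms b l1
  | @GRing.opp _ ?a => collect_atoms a l
  | @GRing.scale _ _ _ ?a => collect_atoms a l
  | @GRing.zero _ => l
  | _ => lazymatch atom_mem t l with true => l | false => constr:(t :: l) end
  end.

Ltac reify_comb t l :=
  lazymatch t with
  | @GRing.add _ ?a ?b =>
      let x := reify_comb a l in let y := reify_comb b l in constr:(CombAdd x y)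
  | @GRing.opp _ ?a => let x := reify_comb a l in constr:(CombOpp x)
  | @GRing.scale _ _ ?k ?a =>
      let s := reify_sign k in let x := reify_comb a l in constr:(CombScale s x)
  | @GRing.zero _ => constr:(CombZero)
  | _ => let n := atom_index t l in constr:(Atom n)
  end.

Ltac reflect_comb K V :=
  lazymatch goal with |- ?L = ?R =>
    let l := collect_atoms R ltac:(collect_atoms L (@nil V)) in
    let eL := reify_comb L l in
    let eR := reify_comb R l in
    let n := eval cbv [size] in (size l) in
    change (@comb_eval K V l eL = @comb_eval K V l eR);
    apply: (@comb_eval_eq K V l n eL eR erefl)
  end.

Section Coboundaries.
Variables (K : fieldType) (T V : lmodType K) (delta : K).
Variables (br : T -> T -> T -> T) (theta : T -> T -> V -> V).

Definition fundamental_defect (ia ib ic id : bool) (a b c d e : T) : T :=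
  br a b (br c d e)
  - (br (br a b c) d e + sgn K (ic && (ia (+) ib)) *: br c (br a b d) e
     + (delta * sgn K ((ia (+) ib) && (ic (+) id))) *: br c d (br a b e)).

Definition rep_R1 (ia : bool) a (ib : bool) b (ic : bool) c (id : bool) d v : V :=
  sgn K ((ia (+) ib) && (ic (+) id)) *: theta c d (theta a b v)
  - (delta * sgn K ((ia && ib) (+) (id && (ic (+) ia)))) *: theta b d (theta a c v)
  - theta a (br b c d) v
  + sgn K (ia && (ib (+) ic)) *: Dop delta theta ib b ic c (theta a d v).

Definition rep_R2 (ia : bool) a (ib : bool) b (ic : bool) c (id : bool) d v : V :=
  (delta * sgn K ((ia (+) ib) && (ic (+) id))) *: theta c d (Dop delta theta ia a ib b v)
  - delta *: Dop delta theta ia a ib b (theta c d v)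
  + theta (br a b c) d v
  + (delta * sgn K (ic && (ia (+) ib))) *: theta c (br a b d) v.

Definition rep_R3 (ia : bool) a (ib : bool) b (ic : bool) c (id : bool) d v : V :=
  Dop delta theta (ia (+) ib (+) ic) (br a b c) id d v
  + sgn K (ic && (ia (+) ib)) *: Dop delta theta ic c (ia (+) ib (+) id) (br a b d) v
  - delta *: Dop delta theta ia a ib b (Dop delta theta ic c id d v)
  + sgn K ((ia (+) ib) && (ic (+) id)) *: Dop delta theta ic c id d (Dop delta theta ia a ib b v).

Section Expansion.
Hypothesis delta_pm1 : delta = 1 \/ delta = -1.
Hypothesis theta_lin : forall a b, lin1 (theta a b).
Variables (f : T -> V) (df : bool).
Hypothesis f_lin : lin1 f.

Lemma d3_d1E i1 i2 i3 i4 i5 x1 x2 x3 x4 x5 :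
  d3 delta br theta (d1 delta br theta f df) df i1 x1 i2 x2 i3 x3 i4 x4 i5 x5 =
    sgn K ((df (+) i1) && (i2 (+) i3 (+) i4 (+) i5))
      *: rep_R1 i2 x2 i3 x3 i4 x4 i5 x5 (f x1)
  - (delta * sgn K ((i2 && (i3 (+) i4 (+) i5)) (+) (df && (i1 (+) i3 (+) i4 (+) i5))))
      *: rep_R1 i1 x1 i3 x3 i4 x4 i5 x5 (f x2)
  + sgn K ((i3 && (i4 (+) i5)) (+) (df && (i1 (+) i2 (+) i4 (+) i5)))
      *: rep_R2 i1 x1 i2 x2 i4 x4 i5 x5 (f x3)
  - (delta * sgn K ((i4 && i5) (+) (df && (i1 (+) i2 (+) i3 (+) i5))))
      *: rep_R2 i1 x1 i2 x2 i3 x3 i5 x5 (f x4)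
  + (delta * sgn K (df && (i1 (+) i2 (+) i3 (+) i4)))
      *: rep_R3 i1 x1 i2 x2 i3 x3 i4 x4 (f x5)
  + f (fundamental_defect i1 i2 i3 i4 x1 x2 x3 x4 x5).
Proof.
have thetaD a b := lin1D (theta_lin a b).
have thetaZ a b := lin1Z (theta_lin a b).
have thetaN a b := lin1N (theta_lin a b).
rewrite /d3 /d1 /rep_R1 /rep_R2 /rep_R3 /fundamental_defect /Dop.
rewrite !(lin1D f_lin, lin1Z f_lin, lin1N f_lin, thetaD, thetaZ, thetaN).
case: delta_pm1 => ->; reflect_comb K V; clear -df i1 i2 i3 i4 i5;
  by case: df; case: i1; case: i2; case: i3; case: i4; case: i5; vm_compute.
Qed.

End Expansion.

Lemma d2E (f : T -> T -> V) df iy y i1 x1 i2 x2 i3 x3 :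
  d2 delta br theta f df iy y i1 x1 i2 x2 i3 x3
  = d1 delta br theta (f y) (df (+) iy) i1 x1 i2 x2 i3 x3.
Proof. by rewrite /d2 /d1 [RHS]addrAC. Qed.

Lemma d4_d2E (f : T -> T -> V) df iy y i1 x1 i2 x2 i3 x3 i4 x4 i5 x5 :
  d4 delta br theta (d2 delta br theta f df) df iy y i1 x1 i2 x2 i3 x3 i4 x4 i5 x5
  = d3 delta br theta (d1 delta br theta (f y) (df (+) iy)) (df (+) iy)
       i1 x1 i2 x2 i3 x3 i4 x4 i5 x5.
Proof. by rewrite /d4 /d3 !d2E. Qed.

Variables (T_ : bool -> {pred T}) (V_ : bool -> {pred V}).

Lemma fundamental_defect_eq0 ia ib ic id ie a b c d e :
  is_dJLSTS T_ delta br ->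
  a \in T_ ia -> b \in T_ ib -> c \in T_ ic -> d \in T_ id -> e \in T_ ie ->
  fundamental_defect ia ib ic id a b c d e = 0.
Proof.
case=> _ _ _ axioms Ta Tb Tc Td Te; rewrite /fundamental_defect.
by have [_ _ _ ->] := axioms _ _ _ _ _ _ _ _ _ _ Ta Tb Tc Td Te; rewrite subrr.
Qed.

Lemma rep_relations_eq0 ia ib ic id a b c d v :
  is_rep T_ V_ delta br theta ->
  a \in T_ ia -> b \in T_ ib -> c \in T_ ic -> d \in T_ id ->
  [/\ rep_R1 ia a ib b ic c id d v = 0, rep_R2 ia a ib b ic c id d v = 0
    & rep_R3 ia a ib b ic c id d v = 0].
Proof. by case=> _ _ _ _ relations; apply: relations. Qed.

Lemma d3_d1_eq0 (f : T -> V) df i1 i2 i3 i4 i5 x1 x2 x3 x4 x5 :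
  is_dJLSTS T_ delta br -> is_rep T_ V_ delta br theta -> lin1 f ->
  x1 \in T_ i1 -> x2 \in T_ i2 -> x3 \in T_ i3 -> x4 \in T_ i4 -> x5 \in T_ i5 ->
  d3 delta br theta (d1 delta br theta f df) df i1 x1 i2 x2 i3 x3 i4 x4 i5 x5 = 0.
Proof.
move=> JT rep f_lin T1 T2 T3 T4 T5.
have [delta_pm1 _ _ _] := JT; have [_ theta_lin _ _ _] := rep.
rewrite d3_d1E // (fundamental_defect_eq0 JT T1 T2 T3 T4 T5) (lin1_0 f_lin).
have [-> _ _] := rep_relations_eq0 (f x1) rep T2 T3 T4 T5.
have [-> _ _] := rep_relations_eq0 (f x2) rep T1 T3 T4 T5.
have [_ -> _] := rep_relations_eq0 (f x3) rep T1 T2 T4 T5.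
have [_ -> _] := rep_relations_eq0 (f x4) rep T1 T2 T3 T5.
have [_ _ ->] := rep_relations_eq0 (f x5) rep T1 T2 T3 T4.
by rewrite !scaler0 !subr0 !addr0.
Qed.

End Coboundaries.

Theorem theorem3p7 (K : fieldType) (T V : lmodType K)
  (T_ : bool -> {pred T}) (V_ : bool -> {pred V}) (delta : K)
  (br : T -> T -> T -> T) (theta : T -> T -> V -> V) :
  is_dJLSTS T_ delta br ->
  is_rep T_ V_ delta br theta ->
  (forall (f : T -> V) (df : bool), homog_lin1 T_ V_ df f ->
     forall (i1 i2 i3 i4 i5 : bool) (x1 x2 x3 x4 x5 : T),
       x1 \in T_ i1 -> x2 \in T_ i2 -> x3 \in T_ i3 -> x4 \in T_ i4 -> x5 \in T_ i5 ->
       d3 delta br theta (d1 delta br theta f df) df i1 x1 i2 x2 i3 x3 i4 x4 i5 x5 = 0)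
  /\
  (forall (f : T -> T -> V) (df : bool), cochain2 T_ V_ delta df f ->
     forall (iy i1 i2 i3 i4 i5 : bool) (y x1 x2 x3 x4 x5 : T),
       y \in T_ iy ->
       x1 \in T_ i1 -> x2 \in T_ i2 -> x3 \in T_ i3 -> x4 \in T_ i4 -> x5 \in T_ i5 ->
       d4 delta br theta (d2 delta br theta f df) df iy y i1 x1 i2 x2 i3 x3 i4 x4 i5 x5 = 0).
Proof.
move=> JT rep; split.
- by move=> f df [f_lin _] i1 i2 i3 i4 i5 x1 x2 x3 x4 x5; apply: (d3_d1_eq0 _ JT rep).
- move=> f df [f_lin _ _ _] iy i1 i2 i3 i4 i5 y x1 x2 x3 x4 x5 _.
  by rewrite d4_d2E; apply: (d3_d1_eq0 _ JT rep (f_lin y)).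
Qed.
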